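(* Let $n,m,n'$ be positive integers with $n\ge m$. Then $$\mu^*(n+n',m+1)\le \mu^*(n,m)+n'.$$
   Context: Let $\mathbb F_2=\{0,1\}$ be the field with two elements. For $u\in\mathbb F_2^n$, $|u|$ denotes the Hamming weight of $u$. A wiring on $n$ vertices is a matrix $W=(w_{i,j})\in M(n,n;\mathbb F_2)$ with $w_{i,i}=1$ for all $i$. The degree of vertex $j$ is the number of $1$s in the $j$th column of $W$. For $c\in\mathbb F_2^n$, $M(W,c)=\max\{|Wx+c| : x\in\mathbb F_2^n\}$. For $n\ge m\ge 1$, $A^*(n,m)$ is the set of wirings on $n$ vertices in which every vertex has degree exactly $m$, and $\mu^*(n,m)=\min\{M(W,0): W\in A^*(n,m)\}$. *)

From mathcomp Require Import all_boot all_order all_algebra.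
Set Implicit Arguments. Unset Strict Implicit. Unset Printing Implicit Defensive.
Import GRing.Theory.
Local Open Scope ring_scope.

Definition hweight (n : nat) (u : 'cV['F_2]_n) : nat :=
  #|[set i : 'I_n | u i ord0 != 0]|.

Definition is_wiring (n : nat) (W : 'M['F_2]_n) : bool :=
  [forall i : 'I_n, W i i == 1].

Definition vdeg (n : nat) (W : 'M['F_2]_n) (j : 'I_n) : nat :=
  #|[set i : 'I_n | W i j != 0]|.

Definition Mwc (n : nat) (W : 'M['F_2]_n) (c : 'cV['F_2]_n) : nat :=
  \max_(x : 'cV['F_2]_n) hweight (W *m x + c).

Definition Astar (n k : nat) : pred 'M['F_2]_n :=
  [pred W | is_wiring W && [forall j : 'I_n, (vdeg W j == k)%N]].

Arguments Astar : clear implicits.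

(* mu*(n,m) = min { M(W,0) : W in A*(n,m) }.
   The neutral element n is an upper bound of every M(W,0), so for
   nonempty A*(n,m) (the case n >= m >= 1) this is exactly the minimum. *)
Definition mu_star (n m : nat) : nat :=
  \big[minn/n]_(W : 'M['F_2]_n | W \in Astar n m) Mwc W 0.

(* Extend W in A*(n,m) to the block matrix W' = [[W, W E], [C, 1]] on n + n'
   vertices, where every column of E is the unit vector at a fixed old vertex
   j0 and every column of C the unit vector at a fixed new vertex k0.  The
   columns of W' are [col j W; e_k0] and [col j0 W; e_k], so all degrees are
   m + 1, and W' [x; y] = [W (x + E y); C x + y] has weight at most
   M(W,0) + n'. *)

From mathcomp Require Import all_boot all_order all_algebra.
Set Implicit Arguments.
Unset Strict Implicit.
Unset Printing Implicit Defensive.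
Import Order.TTheory GRing.Theory.
Local Open Scope ring_scope.

Lemma hweightE (n : nat) (u : 'cV['F_2]_n) :
  hweight u = (\sum_i (u i ord0 != 0%R))%N.
Proof.
rewrite /hweight cardsE -sum1_card big_mkcond /=.
by apply: eq_bigr => i _; rewrite unfold_in; case: (u i ord0 != 0).
Qed.

Lemma hweight_col_mx (n1 n2 : nat) (u : 'cV['F_2]_n1) (v : 'cV['F_2]_n2) :
  hweight (col_mx u v) = (hweight u + hweight v)%N.
Proof.
rewrite !hweightE big_split_ord /=.
by congr (_ + _)%N; apply: eq_bigr => i _; rewrite ?col_mxEu ?col_mxEd.
Qed.

Lemma hweight_delta_mx (n : nat) (i0 : 'I_n) :
  hweight (delta_mx i0 0 : 'cV['F_2]_n) = 1%N.
Proof.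
rewrite hweightE (bigD1 i0) //= mxE !eqxx big1 // => i /negbTE ne_i.
by rewrite mxE ne_i.
Qed.

Lemma hweight_le_dim (n : nat) (u : 'cV['F_2]_n) : (hweight u <= n)%N.
Proof. by rewrite /hweight -[n in (_ <= n)%N]card_ord max_card. Qed.

Lemma vdegE (n : nat) (W : 'M['F_2]_n) (j : 'I_n) : vdeg W j = hweight (col j W).
Proof. by apply: eq_card => i; rewrite !inE mxE. Qed.

Lemma mu_star_le_Mwc (n m : nat) (W : 'M['F_2]_n) :
  W \in Astar n m -> (mu_star n m <= Mwc W 0)%N.
Proof.
move=> AW; rewrite /mu_star -minEnat.
exact: (bigmin_le_cond _ (fun W => Mwc W 0) (P := fun W => W \in Astar n m) AW).
Qed.

Lemma mu_star_le_dim (n m : nat) : (mu_star n m <= n)%N.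
Proof.
rewrite /mu_star -minEnat.
exact: (bigmin_le_id _ _ (fun W => W \in Astar n m) (fun W => Mwc W 0)).
Qed.

Lemma mu_star_le_lift (n m n' m' c : nat) (f : 'M['F_2]_n -> 'M['F_2]_n') :
  (n' <= n + c)%N ->
  {in Astar n m, forall W, f W \in Astar n' m'} ->
  {in Astar n m, forall W, Mwc (f W) 0 <= Mwc W 0 + c}%N ->
  (mu_star n' m' <= mu_star n m + c)%N.
Proof.
move=> le_n' fA fM; rewrite {2}/mu_star.
apply: (big_ind (fun x => mu_star n' m' <= x + c)%N).
- exact: leq_trans (@mu_star_le_dim n' m') le_n'.
- by move=> a b le_a le_b; rewrite /minn; case: ifP.
move=> W AW; exact: leq_trans (mu_star_le_Mwc (fA W AW)) (fM W AW).
Qed.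

Section ExtendWiring.

Variables (n n' : nat) (j0 : 'I_n) (k0 : 'I_n').

Definition ext_up : 'M['F_2]_(n, n') := \matrix_(i, k) (i == j0)%:R.
Definition ext_left : 'M['F_2]_(n', n) := \matrix_(k, j) (k == k0)%:R.

Definition extend_wiring (W : 'M['F_2]_n) : 'M['F_2]_(n + n') :=
  block_mx W (W *m ext_up) ext_left 1%:M.

Lemma col_ext_up k : col k ext_up = delta_mx j0 0.
Proof. by apply/matrixP => i l; rewrite !mxE [l]ord1 eqxx andbT. Qed.

Lemma col_ext_left j : col j ext_left = delta_mx k0 0.
Proof. by apply/matrixP => k l; rewrite !mxE [l]ord1 eqxx andbT. Qed.

Lemma Mwc_extend_wiring W : (Mwc (extend_wiring W) 0 <= Mwc W 0 + n')%N.
Proof.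
apply/bigmax_leqP => x _; rewrite addr0 -[x]vsubmxK mul_block_col hweight_col_mx.
apply: leq_add; last exact: hweight_le_dim.
by rewrite -mulmxA -mulmxDr -[W *m _]addr0; apply: leq_bigmax.
Qed.

Lemma extend_wiring_Astar m W :
  W \in Astar n m -> extend_wiring W \in Astar (n + n') m.+1.
Proof.
rewrite !inE => /andP[/forallP diagW /forallP degW]; apply/andP; split.
  apply/forallP => i; case: (split_ordP i) => k ->.
    by rewrite block_mxEul diagW.
  by rewrite block_mxEdr mxE eqxx.
apply/forallP => j; rewrite vdegE /extend_wiring block_mxEv col_col_mx.
case: (split_ordP j) => k ->; rewrite ?colKl ?colKr hweight_col_mx.
  by rewrite col_ext_left hweight_delta_mx -vdegE (eqP (degW k)) addn1.
rewrite colE -mulmxA -colE col_ext_up -colE col1 hweight_delta_mx.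
by rewrite -vdegE (eqP (degW j0)) addn1.
Qed.

End ExtendWiring.

Theorem lemma5p2 (n m n' : nat) :
  (0 < n)%N -> (0 < m)%N -> (0 < n')%N -> (m <= n)%N ->
  (mu_star (n + n') m.+1 <= mu_star n m + n')%N.
Proof.
move=> n_gt0 _ n'_gt0 _.
apply: (mu_star_le_lift (f := extend_wiring (Ordinal n_gt0) (Ordinal n'_gt0))).
- exact: leqnn.
- by move=> W; apply: extend_wiring_Astar.
- by move=> W _; apply: Mwc_extend_wiring.
Qed.
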